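(* Let $\alpha > 0$ and let $\mathcal{X} \subset \mathbb{R}^2$ be a finite set with no $\alpha$-isolated points. Then the vertices of the $\alpha$-shape of $\mathcal{X}$ and the vertices of the $\alpha$-convex hull of $\mathcal{X}$ coincide.
   Context: A point $x\in\mathcal{X}$ is $\alpha$-isolated if there is no other point of $\mathcal{X}$ within distance $2\alpha$ of $x$. A pair of distinct points $x,x'\in\mathcal{X}$ forms an $\alpha$-edge if there is an open ball $B$ of radius $\alpha$ with $x,x'\in\partial B$ and $B\cap\mathcal{X}=\emptyset$; the $\alpha$-shape of $\mathcal{X}$ is the union of the segments $[xx']$ over all $\alpha$-edges, and its vertices are the points of $\mathcal{X}$ that are endpoints of some $\alpha$-edge. The $\alpha$-convex hull $H$ of $\mathcal{X}$ is the smallest $\alpha$-convex set containing $\mathcal{X}$ (a set $T$ is $\alpha$-convex if for every $x\notin\bar T$ there is an open ball of radius $\alpha$ containing $x$ and disjoint from $\bar T$); equivalently $H=\bigcap_{B}(\mathbb{R}^2\setminus B)$ over all open balls $B$ of radius $\alpha$ with $B\cap\mathcal{X}=\emptyset$. Its vertices are the points of $\mathcal{X}$ lying on $\partial H$. *)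

From Stdlib Require Import Reals List.
Open Scope R_scope.

Definition point := (R * R)%type.

Definition dist2 (p q : point) : R :=
  sqrt ((fst p - fst q) ^ 2 + (snd p - snd q) ^ 2).

Definition open_ball (c : point) (a : R) (z : point) : Prop := dist2 c z < a.

Definition alpha_isolated (a : R) (X : list point) (x : point) : Prop :=
  ~ (exists y, In y X /\ y <> x /\ dist2 x y <= 2 * a).

Definition empty_ball (a : R) (X : list point) (c : point) : Prop :=
  forall y, In y X -> ~ open_ball c a y.

Definition alpha_edge (a : R) (X : list point) (x x' : point) : Prop :=
  In x X /\ In x' X /\ x <> x' /\
  exists c, dist2 c x = a /\ dist2 c x' = a /\ empty_ball a X c.

Definition alpha_shape_vertex (a : R) (X : list point) (x : point) : Prop :=
  In x X /\ exists x', alpha_edge a X x x'.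

Definition alpha_hull (a : R) (X : list point) (z : point) : Prop :=
  forall c, empty_ball a X c -> ~ open_ball c a z.

Definition closure2 (S : point -> Prop) (z : point) : Prop :=
  forall eps, 0 < eps -> exists w, S w /\ dist2 z w < eps.

Definition boundary2 (S : point -> Prop) (z : point) : Prop :=
  closure2 S z /\ closure2 (fun w => ~ S w) z.

Definition alpha_hull_vertex (a : R) (X : list point) (x : point) : Prop :=
  In x X /\ boundary2 (alpha_hull a X) x.

(* Proof: every open alpha-ball with [x] on its boundary has its centre on the
   circle of radius alpha around [x]; let [h t] be the distance from the centre
   of angle [t] to the nearest other point of X.

   If [x] is an alpha-shape vertex, an empty ball has [x] on its boundary, and
   the points between [x] and its centre lie outside the hull but arbitrarily
   close to [x]; since X lies in the hull, [x] is a hull vertex.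

   Conversely, if [x] is a limit of points outside the hull, every such point
   lies in an empty ball whose centre is almost at distance alpha from [x];
   moving it radially onto the circle shows that [sup h >= alpha].  As [x] is
   not isolated, some centre on the circle is within alpha of another point,
   so [h <= alpha] there.  By continuity [h t = alpha] for some [t]: the ball of
   centre [t] is empty and carries [x] and a second point of X on its
   boundary, an alpha-edge. *)
From Stdlib Require Import Reals List.
From Stdlib Require Import Rgeom Lra Classical.
Open Scope R_scope.

Lemma dist2_ge0 p q : 0 <= dist2 p q.
Proof. apply sqrt_pos. Qed.

Lemma dist2_sym p q : dist2 p q = dist2 q p.
Proof. unfold dist2. f_equal. ring. Qed.

Lemma dist2_xx p : dist2 p p = 0.
Proof.
  unfold dist2. replace ((fst p - fst p) ^ 2 + (snd p - snd p) ^ 2) with 0 by ring.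
  apply sqrt_0.
Qed.

Lemma dist2_eq0 p q : dist2 p q = 0 -> p = q.
Proof.
  unfold dist2. intro H.
  apply sqrt_eq_0 in H; [|apply Rplus_le_le_0_compat; apply pow2_ge_0].
  destruct p as [p1 p2], q as [q1 q2]; simpl in *.
  pose proof (pow2_ge_0 (p1 - q1)). pose proof (pow2_ge_0 (p2 - q2)).
  assert (E1 : p1 - q1 = 0) by (apply Rsqr_0_uniq; unfold Rsqr; nra).
  assert (E2 : p2 - q2 = 0) by (apply Rsqr_0_uniq; unfold Rsqr; nra).
  f_equal; lra.
Qed.

Lemma dist2_triangle p q r : dist2 p q <= dist2 p r + dist2 r q.
Proof.
  assert (E : forall u v, dist2 u v = dist_euc (fst u) (snd u) (fst v) (snd v)).
  { intros. unfold dist2, dist_euc, Rsqr. f_equal. ring. }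
  rewrite !E. apply triangle.
Qed.

Lemma dist2_scale (u v p q : point) (k : R) :
  fst u - fst v = k * (fst p - fst q) -> snd u - snd v = k * (snd p - snd q) ->
  dist2 u v = Rabs k * dist2 p q.
Proof.
  intros H1 H2. unfold dist2. rewrite H1, H2.
  replace ((k * (fst p - fst q)) ^ 2 + (k * (snd p - snd q)) ^ 2)
    with (Rsqr k * ((fst p - fst q) ^ 2 + (snd p - snd q) ^ 2)) by (unfold Rsqr; ring).
  rewrite sqrt_mult, sqrt_Rsqr_abs; [reflexivity | apply Rle_0_sqr |].
  apply Rplus_le_le_0_compat; apply pow2_ge_0.
Qed.

Lemma unit_vector_angle (u1 u2 : R) : u1 ^ 2 + u2 ^ 2 = 1 ->
  exists t, 0 <= t <= 2 * PI /\ cos t = u1 /\ sin t = u2.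
Proof.
  intro H. assert (B : -1 <= u1 <= 1) by nra.
  assert (S : sqrt (1 - u1²) = Rabs u2).
  { rewrite <- sqrt_Rsqr_abs. f_equal. unfold Rsqr. nra. }
  pose proof (acos_bound u1). pose proof PI_RGT_0.
  destruct (Rle_dec 0 u2).
  - exists (acos u1). split; [lra|]. split; [apply cos_acos; auto|].
    rewrite sin_acos, S by auto. apply Rabs_pos_eq; auto.
  - exists (2 * PI - acos u1). split; [lra|].
    rewrite cos_minus, sin_minus, cos_2PI, sin_2PI, cos_acos, sin_acos, S by auto.
    rewrite Rabs_left by lra. split; ring.
Qed.

Definition point_eq_dec (p q : point) : {p = q} + {p <> q}.
Proof.
  destruct p as [p1 p2], q as [q1 q2].
  destruct (Req_dec_T p1 q1), (Req_dec_T p2 q2);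
    [left; congruence | right; congruence ..].
Defined.

Definition circle_point (x : point) (a t : R) : point :=
  (fst x + a * cos t, snd x + a * sin t).

Lemma dist2_circle_point x a t : 0 <= a -> dist2 (circle_point x a t) x = a.
Proof.
  intro Ha. unfold dist2, circle_point; cbn [fst snd].
  replace ((fst x + a * cos t - fst x) ^ 2 + (snd x + a * sin t - snd x) ^ 2)
    with (a ^ 2) by (pose proof (sin2_cos2 t); unfold Rsqr in *; nra).
  apply sqrt_pow2; auto.
Qed.

Lemma circle_point_nearest x a p : 0 < dist2 p x ->
  exists t, 0 <= t <= 2 * PI /\
    dist2 (circle_point x a t) p = Rabs (dist2 p x - a).
Proof.
  intro Hd. set (d := dist2 p x) in *.
  destruct (unit_vector_angle ((fst p - fst x) / d) ((snd p - snd x) / d))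
    as [t [Ht [Hc Hs]]].
  { assert (E : d ^ 2 = (fst p - fst x) ^ 2 + (snd p - snd x) ^ 2).
    { unfold d, dist2. apply pow2_sqrt.
      apply Rplus_le_le_0_compat; apply pow2_ge_0. }
    replace (((fst p - fst x) / d) ^ 2 + ((snd p - snd x) / d) ^ 2) with
      (((fst p - fst x) ^ 2 + (snd p - snd x) ^ 2) / d ^ 2) by (field; lra).
    rewrite <- E. field. lra. }
  exists t. split; auto.
  rewrite (dist2_scale _ _ p x (a / d - 1)).
  - fold d. rewrite <- (Rabs_pos_eq d) at 2 by lra.
    rewrite <- Rabs_mult, <- Rabs_Ropp. f_equal. field. lra.
  - unfold circle_point; cbn [fst snd]. rewrite Hc. field. lra.
  - unfold circle_point; cbn [fst snd]. rewrite Hs. field. lra.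
Qed.

Lemma dist2_segment (p c : point) (s : R) :
  let w := (fst p + s * (fst c - fst p), snd p + s * (snd c - snd p)) in
  dist2 p w = Rabs s * dist2 c p /\ dist2 c w = Rabs (1 - s) * dist2 c p.
Proof.
  intro w. split.
  - rewrite <- (Rabs_Ropp s). apply dist2_scale; unfold w; cbn [fst snd]; ring.
  - apply dist2_scale; unfold w; cbn [fst snd]; ring.
Qed.

Lemma Rmin_Rabs u v : Rmin u v = (u + v - Rabs (u - v)) / 2.
Proof.
  unfold Rmin. destruct (Rle_dec u v).
  - rewrite Rabs_left1 by lra. field.
  - rewrite Rabs_right by lra. field.
Qed.

Lemma continuity_Rmin f g :
  continuity f -> continuity g -> continuity (fun t => Rmin (f t) (g t)).
Proof.
  intros Hf Hg t.
  apply (continuity_pt_locally_ext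
    (fun t => (f t + g t - Rabs (f t - g t)) / 2) _ 1); [lra | |].
  { intros; symmetry; apply Rmin_Rabs. }
  unfold Rdiv. apply continuity_pt_mult; [|apply continuity_pt_const; now intros u v].
  apply continuity_pt_minus; [apply continuity_pt_plus; auto|].
  apply (continuity_pt_comp (fun t => f t - g t) Rabs);
    [apply continuity_pt_minus; auto | apply Rcontinuity_abs].
Qed.

Section NearestOther.
Variables (a : R) (x : point) (X : list point).

(* The empty-list value [3 * a] is a junk cap exceeding [a], so the value [a]
   is only ever attained at a genuine point of [X]. *)
Fixpoint nearest_other_dist (L : list point) (c : point) : R :=
  match L with
  | nil => 3 * a
  | y :: L' =>
      if point_eq_dec y x then nearest_other_dist L' c
      else Rmin (dist2 c y) (nearest_other_dist L' c)
  end.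

Lemma nearest_other_dist_le L c y :
  In y L -> y <> x -> nearest_other_dist L c <= dist2 c y.
Proof.
  induction L as [|z L IH]; simpl; [tauto|]. intros [->|Hin] Hne.
  - destruct (point_eq_dec y x); [tauto | apply Rmin_l].
  - destruct (point_eq_dec z x); auto.
    eapply Rle_trans; [apply Rmin_r | auto].
Qed.

Lemma nearest_other_dist_gt L c m : m < 3 * a ->
  (forall y, In y L -> y <> x -> m < dist2 c y) -> m < nearest_other_dist L c.
Proof.
  intros Hm. induction L as [|z L IH]; simpl; intro H; auto.
  destruct (point_eq_dec z x); [apply IH; auto | apply Rmin_glb_lt; auto].
Qed.

Lemma nearest_other_dist_attained L c : nearest_other_dist L c = 3 * a \/
  exists y, In y L /\ y <> x /\ nearest_other_dist L c = dist2 c y.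
Proof.
  induction L as [|z L IH]; simpl; auto.
  destruct (point_eq_dec z x).
  - destruct IH as [IH|[y [H1 [H2 H3]]]]; auto. right; exists y; auto.
  - destruct (Rle_dec (dist2 c z) (nearest_other_dist L c)).
    + rewrite Rmin_left by auto. right; exists z; auto.
    + rewrite Rmin_right by lra.
      destruct IH as [IH|[y [H1 [H2 H3]]]]; auto. right; exists y; auto.
Qed.

Lemma continuity_dist2_circle_point y :
  continuity (fun t => dist2 (circle_point x a t) y).
Proof.
  intro t. unfold dist2, circle_point; cbn [fst snd].
  apply (continuity_pt_comp (fun t =>
    (fst x + a * cos t - fst y) ^ 2 + (snd x + a * sin t - snd y) ^ 2) sqrt).
  - reg.
  - apply continuity_pt_sqrt. apply Rplus_le_le_0_compat; apply pow2_ge_0.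
Qed.

Lemma continuity_nearest_other_dist L :
  continuity (fun t => nearest_other_dist L (circle_point x a t)).
Proof.
  induction L as [|z L IH]; simpl.
  - intro t. apply continuity_pt_const. now intros u v.
  - destruct (point_eq_dec z x); auto.
    apply continuity_Rmin; [apply continuity_dist2_circle_point | exact IH].
Qed.

Let h t := nearest_other_dist X (circle_point x a t).

Hypotheses (Ha : 0 < a) (Hx : In x X).

Lemma empty_ball_circle_point t : a <= h t -> empty_ball a X (circle_point x a t).
Proof.
  intros H y Hy. unfold open_ball. destruct (point_eq_dec y x) as [->|n].
  - rewrite dist2_circle_point; lra.
  - pose proof (nearest_other_dist_le X (circle_point x a t) y Hy n). unfold h in H. lra.
Qed.

Lemma alpha_shape_vertex_circle_point t : h t = a -> alpha_shape_vertex a X x.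
Proof.
  intro Hz.
  destruct (nearest_other_dist_attained X (circle_point x a t))
    as [E|[y [Hy [Hyx Hyd]]]]; [unfold h in Hz; lra|].
  split; [exact Hx|]. exists y. split; [exact Hx|]. split; [exact Hy|].
  split; [congruence|]. exists (circle_point x a t). split; [apply dist2_circle_point; lra|].
  split; [unfold h in Hz; lra|]. apply empty_ball_circle_point. lra.
Qed.

Lemma not_isolated_circle_point_le :
  ~ alpha_isolated a X x -> exists t, h t <= a.
Proof.
  intro Hni. apply NNPP in Hni. destruct Hni as [y [Hy [Hyx Hxy]]].
  assert (Hd : 0 < dist2 y x).
  { destruct (Rle_lt_or_eq_dec 0 (dist2 y x) (dist2_ge0 _ _)); auto.
    exfalso. apply Hyx, dist2_eq0. now symmetry. }
  destruct (circle_point_nearest x a y Hd) as [t [_ Ht]].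
  exists t. eapply Rle_trans; [exact (nearest_other_dist_le X _ y Hy Hyx)|].
  rewrite Ht, dist2_sym. apply Rabs_le. pose proof (dist2_ge0 x y). lra.
Qed.

Lemma empty_ball_dist2_ge c y : empty_ball a X c -> In y X -> a <= dist2 c y.
Proof. intros He Hy. apply Rnot_lt_le. exact (He y Hy). Qed.

(* A centre [c] of an empty ball with [a <= dist2 c x < a + eps], pushed
   radially onto the circle, moves by less than [eps]. *)
Lemma hull_complement_closure_circle_point m :
  closure2 (fun w => ~ alpha_hull a X w) x -> m < a ->
  exists t, 0 <= t <= 2 * PI /\ m < h t.
Proof.
  intros Hcl Hm. set (eps := a - m).
  destruct (Hcl eps ltac:(unfold eps; lra)) as [w [Hw Hxw]].
  apply not_all_ex_not in Hw. destruct Hw as [c Hw].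
  apply imply_to_and in Hw. destruct Hw as [Hc Hcw]. apply NNPP in Hcw.
  unfold open_ball in Hcw.
  pose proof (empty_ball_dist2_ge c x Hc Hx) as Hcx.
  assert (Hcx' : dist2 c x < a + eps).
  { pose proof (dist2_triangle c x w). rewrite (dist2_sym w x) in *. lra. }
  destruct (circle_point_nearest x a c ltac:(lra)) as [t [Ht Hct]].
  rewrite Rabs_pos_eq in Hct by lra.
  exists t. split; auto. apply nearest_other_dist_gt; [lra|].
  intros y Hy _. pose proof (empty_ball_dist2_ge c y Hc Hy).
  pose proof (dist2_triangle c y (circle_point x a t)).
  rewrite (dist2_sym c (circle_point x a t)) in *. unfold eps in *. lra.
Qed.

Lemma hull_vertex_circle_point_ge :
  alpha_hull_vertex a X x -> exists t, a <= h t.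
Proof.
  intros [_ [_ Hcl]].
  assert (H2P : 0 <= 2 * PI) by (pose proof PI_RGT_0; lra).
  destruct (continuity_ab_maj h 0 (2 * PI) H2P
    (fun t _ => continuity_nearest_other_dist X t)) as [ts [Hmax _]].
  exists ts. apply Rnot_lt_le. intro Hlt.
  destruct (hull_complement_closure_circle_point (h ts) Hcl Hlt) as [t [Ht Hgt]].
  specialize (Hmax t Ht). lra.
Qed.

End NearestOther.

Lemma continuity_level (f : R -> R) (c u v : R) :
  continuity f -> f v <= c <= f u -> exists z, f z = c.
Proof.
  intros Hf Hc.
  assert (Hg : continuity (fun t => f t - c)).
  { apply continuity_minus; auto. apply continuity_const. now intros p q. }
  assert (Hprod : forall p q, (f p - c) * (f q - c) <= 0 ->
    exists z, f z = c).
  { intros p q Hpq. destruct (Rle_dec p q).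
    - destruct (IVT_cor _ p q Hg r Hpq) as [z [_ Hz]]. exists z; lra.
    - destruct (IVT_cor _ q p Hg ltac:(lra)) as [z [_ Hz]]; [lra|]. exists z; lra. }
  apply (Hprod u v). nra.
Qed.

Lemma alpha_hull_In a X x : In x X -> alpha_hull a X x.
Proof. intros Hx c Hc. exact (Hc x Hx). Qed.

Lemma alpha_shape_vertex_hull_vertex a X x :
  0 < a -> alpha_shape_vertex a X x -> alpha_hull_vertex a X x.
Proof.
  intros Ha [Hx [x' [_ [_ [_ [c [Hcx [_ He]]]]]]]].
  split; [exact Hx|]. split.
  - intros eps Heps. exists x. split; [apply alpha_hull_In; auto|].
    rewrite dist2_xx; lra.
  - intros eps Heps. set (r := Rmin eps a). set (s := r / 2 / a).
    assert (Hr : 0 < r) by (apply Rmin_glb_lt; auto).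
    assert (Hra : r <= a) by apply Rmin_r.
    assert (Hre : r <= eps) by apply Rmin_l.
    assert (Hs : 0 < s < 1).
    { unfold s; split; [apply Rdiv_lt_0_compat; lra|].
      apply (Rmult_lt_reg_r a); auto. field_simplify; lra. }
    destruct (dist2_segment x c s) as [H1 H2].
    eexists. split; [|rewrite H1].
    + intro Hh. apply (Hh c He). unfold open_ball.
      rewrite H2, Hcx, Rabs_pos_eq by lra. nra.
    + rewrite Hcx, Rabs_pos_eq by lra. unfold s. field_simplify; lra.
Qed.

Theorem proposition2 (a : R) (X : list point) :
  0 < a ->
  (forall x, In x X -> ~ alpha_isolated a X x) ->
  forall x, alpha_shape_vertex a X x <-> alpha_hull_vertex a X x.
Proof.
  intros Ha Hiso x. split; [now apply alpha_shape_vertex_hull_vertex|].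
  intro Hv. pose proof (proj1 Hv) as Hx.
  destruct (hull_vertex_circle_point_ge a x X Ha Hx Hv) as [u Hu].
  destruct (not_isolated_circle_point_le a x X (Hiso x Hx)) as [v Hv'].
  destruct (continuity_level _ a u v
    (continuity_nearest_other_dist a x X) (conj Hv' Hu)) as [z Hz].
  exact (alpha_shape_vertex_circle_point a x X Ha Hx z Hz).
Qed.
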